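(* Let $g\ge0$, let $\mu,\nu$ be partitions of $n\ge1$ with $b=g-1+\ell(\mu)+\ell(\nu)>0$, and let $(\sigma_1,\eta_1,\dots,\eta_b,\sigma_2)\in C_g(\mu,\nu)$. Then the pair $(\pi:\Gamma_1\to\Gamma_2,\iota)$ obtained from this tuple by the construction described in the context is a twisted tropical cover (of type $(g,\mu,\nu)$).
   Context: Let $\tau=(1\ \,n{+}1)(2\ \,n{+}2)\cdots(n\ \,2n)\in S_{2n}$, $C^\sim(\tau)=\{\sigma\in S_{2n}:\tau\sigma\tau=\sigma^{-1}\}$. For $\sigma\in C^\sim(\tau)$ each cycle $c$ either has a different cycle $c'$ with $\tau c\tau=c'^{-1}$ ($\tau$-symmetric partners) or satisfies $\tau c\tau=c^{-1}$ (self-symmetric). $B^\sim_n$: elements of $C^\sim(\tau)$ without self-symmetric cycles; $B^\sim_\lambda$ ($\lambda\vdash n$): elements of $B^\sim_n$ with $2\ell(\lambda)$ cycles forming $\tau$-symmetric pairs, one pair of length $\lambda_i$ for each $i$. $2\nu$ denotes the partition of $2n$ with each part of $\nu$ repeated twice. $C_g(\mu,\nu)$ is the set of tuples $(\sigma_1,\eta_1,\dots,\eta_b,\sigma_2)$ with $\sigma_1\in B^\sim_\mu$, $\sigma_2$ of cycle type $2\nu$, each $\eta_i$ a transposition $(x\ y)$ with $y\neq\tau(x)$, $\eta_b\cdots\eta_1\sigma_1(\tau\eta_1\tau)\cdots(\tau\eta_b\tau)=\sigma_2$, and $\langle\sigma_1,\eta_i,\tau\eta_i\tau,\sigma_2\rangle$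 transitive on $\{1,\dots,2n\}$. Construction. Put $\rho_0=\sigma_1$ and $\rho_i=\eta_i\rho_{i-1}(\tau\eta_i\tau)$, so $\rho_b=\sigma_2$; each $\rho_i\in B^\sim_n$, and passing from $\rho_{i-1}$ to $\rho_i$ changes the cycles in exactly one of three ways: (a) two cycles $c_1,c_2$ are joined into one cycle and simultaneously their $\tau$-partners $c_1',c_2'$ are joined into one cycle; (b) one cycle $c$ is cut into two cycles and simultaneously its partner $c'$ is cut into two cycles; (c) a $\tau$-symmetric pair $c,c'$ is replaced by a new $\tau$-symmetric pair of cycles of the same length; all other cycles are unchanged. Let $\Gamma_2$ be $\mathbb{R}$ subdivided at $p_1<\dots<p_b$, $p_0=-\infty$, $p_{b+1}=\infty$. The graph $\Gamma_1$ has, over $[p_i,p_{i+1}]$, one edge for each cycle of $\rho_i$ (for $i=0$ and $i=b$ these are ends); an unchanged cycle continues as the same edge across $p_i$. Over $p_i$ one inserts: in case (a) two $3$-valent vertices, one with incoming edges $c_1,c_2$ and outgoing the joined cycle, the other with incoming $c_1',c_2'$ and outgoing their join; in case (b) two $3$-valent vertices, one with incoming $c$ and outgoing its two pieces, the other likewise for $c'$; in case (c) one $4$-valent vertex with incoming $c,c'$ and outgoing the new pair. Each edge gets weight equal to the length of its cycle, and $\pi$ maps it to the corresponding interval of $\Gamma_2$ linearly with slope equal to its weight (so an edge over $[p_i,p_{i+1}]$ has length $(p_{i+1}-p_i)/\text{weight}$). The involution $\iota$ sends the edge of a cycle to the edge of its $\tau$-partner (and vertices accordingly). Twisted tropical cover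 of type $(g,\mu,\nu)$: a tropical cover $\pi:\Gamma_1\to\Gamma_2$ (surjective map of connected metric graphs, vertices to vertices, each edge mapped bijectively and linearly with positive integer slope $\omega(e)$, the weight, onto an edge, harmonic: at each vertex $v$ the sum of weights of edges at $v$ over an edge $e'$ at $\pi(v)$ is independent of $e'$) together with an involution $\iota$ of $\Gamma_1$ with $\pi\circ\iota=\pi$, such that $\Gamma_2=\mathbb{R}$ subdivided by $b$ points $p_1<\dots<p_b$; the ends over $(-\infty,p_1]$ form $\ell(\mu)$ $\iota$-exchanged pairs of weights $\mu_1,\dots,\mu_{\ell(\mu)}$ and the ends over $[p_b,\infty)$ form $\ell(\nu)$ $\iota$-exchanged pairs of weights $\nu_1,\dots,\nu_{\ell(\nu)}$; over each $p_i$ there are either two $3$-valent vertices or one $4$-valent vertex; all edges at a $4$-valent vertex have the same weight; the fixed locus of $\iota$ is exactly the set of $4$-valent vertices. *)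

From HB Require Import structures.
From mathcomp Require Import all_boot all_order all_algebra all_fingroup.
From mathcomp Require Import reals.
Set Implicit Arguments.
Unset Strict Implicit.
Unset Printing Implicit Defensive.
Import Order.TTheory GRing.Theory Num.Theory.

(* Points {1,...,2n} are represented 0-based by 'I_(n+n).                    *)
(* tau = (1 n+1)(2 n+2)...(n 2n), i.e. i |-> i+n mod 2n (0-based).           *)

Definition tauf (n : nat) (i : 'I_(n + n)) : 'I_(n + n) :=
  Ordinal (ltn_pmod (i + n) (leq_ltn_trans (leq0n i) (ltn_ord i))).

Definition tau_set (n : nat) (A : {set 'I_(n + n)}) : {set 'I_(n + n)} :=
  [set tauf x | x in A].

Definition in_Ctilde (n : nat) (s : {perm 'I_(n + n)}) : Prop :=
  forall i, tauf (s (tauf i)) = (s^-1)%g i.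

(* The cycles of s are identified with their supports, the orbits (porbits s).
   For s in C~(tau), the cycle with support O is self-symmetric
   (tau c tau = c^{-1}) iff tau(O) = O. *)
Definition self_symmetric (n : nat) (O : {set 'I_(n + n)}) : bool :=
  tau_set O == O.

Definition in_Btilde (n : nat) (s : {perm 'I_(n + n)}) : Prop :=
  in_Ctilde s /\ (forall O, O \in porbits s -> ~~ self_symmetric O).

(* B~_lambda : the 2 l(lambda) cycles of s form tau-symmetric pairs
   {c i, tau(c i)}, one pair of length lambda_i for each i. *)
Definition in_Btilde_lam (n : nat) (lam : seq nat) (s : {perm 'I_(n + n)}) : Prop :=
  in_Btilde s /\
  exists c : 'I_(size lam) -> {set 'I_(n + n)},
    [/\ forall i, c i \in porbits s,
        forall i, #|c i| = nth 0 lam i,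
        forall O, O \in porbits s -> exists i, O = c i \/ O = tau_set (c i)
      & #|porbits s| = (size lam).*2].

(* cycle type (multiset of cycle lengths, fixed points included) *)
Definition cycle_type (n : nat) (s : {perm 'I_(n + n)}) : seq nat :=
  map (fun O : {set 'I_(n + n)} => #|O|) (enum (porbits s)).

Definition is_partition (n : nat) (lam : seq nat) : bool :=
  [&& sorted geq lam, all (fun k => 0 < k) lam & sumn lam == n].

(* One step  rho |-> eta rho (tau eta tau)  with eta = (x y), as functions
   (right-to-left composition).  MathComp's product (s * t) x = t (s x). *)
Definition tstep (n : nat) (r : {perm 'I_(n + n)}) (xy : 'I_(n + n) * 'I_(n + n))
  : {perm 'I_(n + n)} :=
  (tperm (tauf xy.1) (tauf xy.2) * r * tperm xy.1 xy.2)%g.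

(* rho_k = eta_k ... eta_1 sigma_1 (tau eta_1 tau) ... (tau eta_k tau) *)
Definition rho (n : nat) (s1 : {perm 'I_(n + n)}) (etas : seq ('I_(n + n) * 'I_(n + n)))
  (k : nat) : {perm 'I_(n + n)} :=
  foldl (@tstep n) s1 (take k etas).

(* The tuple (sigma1, eta_1, ..., eta_b, sigma2) with eta_i = (x_i y_i),
   given as etas = [:: (x_1,y_1); ...; (x_b,y_b)]. *)
Definition gens_set (n b : nat) (s1 s2 : {perm 'I_(n + n)})
  (etas : b.-tuple ('I_(n + n) * 'I_(n + n))) : {set {perm 'I_(n + n)}} :=
  s1 |: (s2 |: ([set tperm xy.1 xy.2 | xy in etas]
          :|: [set tperm (tauf xy.1) (tauf xy.2) | xy in etas])).

Definition in_Cg (n b : nat) (mu nu : seq nat) (s1 : {perm 'I_(n + n)})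
  (etas : b.-tuple ('I_(n + n) * 'I_(n + n))) (s2 : {perm 'I_(n + n)}) : Prop :=
  [/\ in_Btilde_lam mu s1,
      perm_eq (cycle_type s2) (nu ++ nu),
      (forall xy, xy \in etas -> xy.1 != xy.2 /\ xy.2 != tauf xy.1),
      rho s1 etas b = s2
    & [transitive <<gens_set s1 s2 etas>>, on [set: 'I_(n + n)] | 'P]].

(* Tropical covers of Gamma_2 = R subdivided at p_1 < ... < p_b.              *)
(* Combinatorial encoding of a metric graph Gamma_1 with a map pi to Gamma_2: *)
(*  - gpv v = i (1 <= i <= b) : the vertex v lies over p_i;                   *)
(*  - ghe e = j (0 <= j <= b) : e maps onto [p_j, p_(j+1)]                    *)
(*    (p_0 = -oo, p_(b+1) = +oo; j = 0 and j = b are ends);                   *)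
(*  - gsrc e / gtgt e : endpoint of e over p_j / over p_(j+1)  (None = the    *)
(*    end goes to infinity); edges are oriented by pi;                        *)
(*  - gwt e : weight (slope), glen e : length of e (meaningful for bounded e).*)

Record graph_over (R : Type) := GraphOver {
  gV : finType;
  gE : finType;
  gpv : gV -> nat;
  ghe : gE -> nat;
  gsrc : gE -> option gV;
  gtgt : gE -> option gV;
  gwt : gE -> nat;
  glen : gE -> R }.

Record twisted_graph (R : Type) := TwistedGraph {
  tgr : graph_over R;
  tiv : gV tgr -> gV tgr;
  tie : gE tgr -> gE tgr }.


Definition bounded_edge (R : Type) (b : nat) (G : graph_over R) (e : gE G) : bool :=
  0 < ghe e < b.

Definition valence (R : Type) (G : graph_over R) (v : gV G) : nat :=
  #|[set e | gsrc e == Some v]| + #|[set e | gtgt e == Some v]|.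

Definition incid (R : Type) (G : graph_over R) : rel (gV G + gE G) :=
  fun a c => match a, c with
  | inl v, inr e | inr e, inl v => (gsrc e == Some v) || (gtgt e == Some v)
  | _, _ => false
  end.

Definition tropical_cover (R : realType) (b : nat) (p : nat -> R) (G : graph_over R)
  : Prop :=
      (forall v : gV G, 1 <= gpv v <= b) /\
      (forall e : gE G, ghe e <= b) /\
      (forall e : gE G, (gsrc e == None) = (ghe e == 0)
                 /\ forall v : gV G, gsrc e = Some v -> gpv v = ghe e) /\
      (forall e : gE G, (gtgt e == None) = (ghe e == b)
                 /\ forall v : gV G, gtgt e = Some v -> gpv v = (ghe e).+1) /\
      (forall e : gE G, 0 < gwt e) /\
      (forall e : gE G, bounded_edge b e -> ((gwt e)%:R * glen e = p (ghe e).+1 - p (ghe e))%R) /\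
      (forall j, j <= b -> exists e : gE G, ghe e = j) /\
      (forall i, 1 <= i <= b -> exists v : gV G, gpv v = i) /\
      (forall v : gV G, \sum_(e : gE G | gtgt e == Some v) gwt e = \sum_(e : gE G | gsrc e == Some v) gwt e) /\
      (forall a c : (gV G + gE G)%type, connect (@incid R G) a c).

(* Twisted tropical cover of type (g, mu, nu).  Vertices of valence 2 are mere
   subdivision points of Gamma_1. *)
Definition twisted_tropical_cover (R : realType) (g : nat) (mu nu : seq nat) (b : nat)
  (p : nat -> R) (X : twisted_graph R) : Prop :=
  let G := tgr X in let iv := @tiv R X in let ie := @tie R X in
     tropical_cover b p G /\
      (forall v : gV G, iv (iv v) = v) /\ (forall e : gE G, ie (ie e) = e) /\
      (forall e : gE G, gsrc (ie e) = omap iv (gsrc e) /\ gtgt (ie e) = omap iv (gtgt e)) /\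
      (forall e : gE G, bounded_edge b e -> glen (ie e) = glen e) /\
      (forall v : gV G, gpv (iv v) = gpv v) /\ (forall e : gE G, ghe (ie e) = ghe e /\ gwt (ie e) = gwt e) /\
      b = (g + size mu + size nu).-1 /\
      (exists a : 'I_(size mu) -> gE G,
         [/\ forall i, ghe (a i) = 0 /\ gwt (a i) = nth 0 mu i,
             forall e : gE G, ghe e = 0 -> exists i, e = a i \/ e = ie (a i)
           & #|[set e : gE G | ghe e == 0]| = (size mu).*2]) /\
      (exists a : 'I_(size nu) -> gE G,
         [/\ forall i, ghe (a i) = b /\ gwt (a i) = nth 0 nu i,
             forall e : gE G, ghe e = b -> exists i, e = a i \/ e = ie (a i)
           & #|[set e : gE G | ghe e == b]| = (size nu).*2]) /\
      (forall i, 1 <= i <= b ->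
         let Vi := [set v : gV G | (gpv v == i) && (valence v != 2)] in
         (exists v w : gV G, [/\ v != w, Vi = [set v; w], valence v = 3 & valence w = 3])
         \/ (exists v : gV G, Vi = [set v] /\ valence v = 4)) /\
      (forall v : gV G, valence v = 4 -> forall e e' : gE G,
         (gsrc e == Some v) || (gtgt e == Some v) ->
         (gsrc e' == Some v) || (gtgt e' == Some v) -> gwt e = gwt e') /\
      (forall e : gE G, ie e != e) /\ (forall v : gV G, iv v = v <-> valence v = 4).

(* Step k (0-based k < b) is the passage rho_k -> rho_(k+1) by                *)
(* eta_(k+1) = (x y); it lies over p_(k+1).                                   *)

Definition sdat (n b : nat) (etas : b.-tuple ('I_(n + n) * 'I_(n + n))) (k : 'I_b) :=
  tnth etas k.

Definition Sset n b etas (k : 'I_b) : {set 'I_(n + n)} :=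
  [set (@sdat n b etas k).1; (sdat etas k).2; tauf (sdat etas k).1; tauf (sdat etas k).2].

(* case (c) : x and y lie in tau-partner cycles of rho_k *)
Definition caseC n b (s1 : {perm 'I_(n + n)}) etas (k : 'I_b) : bool :=
  (@sdat n b etas k).2 \in porbit (rho s1 etas k) (tauf (sdat etas k).1).

Definition touched n b etas (k : 'I_b) (O : {set 'I_(n + n)}) : bool :=
  ~~ [disjoint O & @Sset n b etas k].

(* which of the (at most two) vertices over p_(k+1) an affected cycle is
   attached to : in case (c) the unique 4-valent vertex (true); otherwise the
   vertex of the cycles through x,y (true) or through tau x, tau y (false). *)
Definition side n b s1 etas (k : 'I_b) (O : {set 'I_(n + n)}) : bool :=
  @caseC n b s1 etas k || ~~ [disjoint O & [set (sdat etas k).1; (sdat etas k).2]].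

(* raw vertices : inl (k, s) = vertex of side s at step k;
                  inr (k, O) = 2-valent subdivision point over p_(k+1) on the
                               edge of an unaffected cycle O. *)
Definition rawV (n b : nat) := (('I_b * bool) + ('I_b * {set 'I_(n + n)}))%type.

Definition validV n b s1 etas (v : rawV n b) : bool :=
  match v with
  | inl (k, s) => @caseC n b s1 etas k ==> s
  | inr (k, A) => (A \in porbits (rho s1 etas k)) && ~~ touched etas k A
  end.

Definition cV n b s1 etas := {v : rawV n b | @validV n b s1 etas v}.

(* edges : (j, O) with O a cycle of rho_j, lying over [p_j, p_(j+1)] *)
Definition rawE (n b : nat) := ('I_b.+1 * {set 'I_(n + n)})%type.

Definition validE n b s1 (etas : b.-tuple _) (e : rawE n b) : bool :=
  e.2 \in porbits (@rho n s1 etas e.1).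

Definition cE n b s1 etas := {e : rawE n b | @validE n b s1 etas e}.

(* the vertex over p_(k+1) at which the edge of the cycle O (of rho_k or of
   rho_(k+1)) ends resp. starts *)
Definition vertex_at n b s1 etas (k : nat) (O : {set 'I_(n + n)}) : option (cV s1 etas) :=
  if @insub nat (fun k => k < b) 'I_b k is Some k' then
    insub (if touched etas k' O then inl (k', @side n b s1 etas k' O)
           else inr (k', O))
  else None.

Definition c_src n b s1 etas (e : @cE n b s1 etas) : option (cV s1 etas) :=
  if val (val e).1 == 0 then None else vertex_at s1 etas (val (val e).1).-1 (val e).2.

Definition c_tgt n b s1 etas (e : @cE n b s1 etas) : option (cV s1 etas) :=
  vertex_at s1 etas (val (val e).1) (val e).2.

Definition c_pv n b s1 etas (v : @cV n b s1 etas) : nat :=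
  match val v with inl (k, _) => (val k).+1 | inr (k, _) => (val k).+1 end.

Definition c_he n b s1 etas (e : @cE n b s1 etas) : nat := val (val e).1.

Definition c_wt n b s1 etas (e : @cE n b s1 etas) : nat := #|(val e).2|.

Definition c_len (R : realType) (p : nat -> R) n b s1 etas (e : @cE n b s1 etas) : R :=
  ((p (c_he e).+1 - p (c_he e)) / (c_wt e)%:R)%R.

Definition c_iv n b s1 etas (v : @cV n b s1 etas) : cV s1 etas :=
  insubd v (match val v with
            | inl (k, s) => inl (k, caseC s1 etas k || ~~ s)
            | inr (k, A) => inr (k, tau_set A)
            end).

Definition c_ie n b s1 etas (e : @cE n b s1 etas) : cE s1 etas :=
  insubd e ((val e).1, tau_set (val e).2).

Definition construction (R : realType) (p : nat -> R) (n b : nat)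
  (s1 : {perm 'I_(n + n)}) (etas : b.-tuple ('I_(n + n) * 'I_(n + n)))
  : twisted_graph R :=
  @TwistedGraph R
    (@GraphOver R (cV s1 etas) (cE s1 etas) (@c_pv n b s1 etas) (@c_he n b s1 etas)
       (@c_src n b s1 etas) (@c_tgt n b s1 etas) (@c_wt n b s1 etas)
       (@c_len R p n b s1 etas))
    (@c_iv n b s1 etas) (@c_ie n b s1 etas).

From Pilot Require Import Defs.
From HB Require Import structures.
From mathcomp Require Import all_boot all_order all_algebra all_fingroup.
From mathcomp Require Import reals zify.
Set Implicit Arguments.
Unset Strict Implicit.
Unset Printing Implicit Defensive.

(* Every rho_k satisfies the pointwise form of B~_n: rho_k is in C~(tau) and
   never maps a point z to tau z.  This is preserved by each step
   rho |-> eta rho (tau eta tau), and it rules out self-symmetric cycles, so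
   O |-> tau(O) is a fixed-point-free involution on edges.  The step with
   eta = (x y) only changes the cycles through x, y, tau x, tau y.  If y lies in
   the cycle of tau x (case (c)), the pair of cycles through x and tau x is
   replaced by a new pair with the same union: one self-symmetric 4-valent
   vertex.  Otherwise the cycles through x and y are joined or cut, with the
   same union, and symmetrically for tau x and tau y: two exchanged 3-valent
   vertices.  Preservation of these unions is harmonicity.  For connectedness,
   every generator of the transitivity group moves a point only between cycles
   whose edges meet at a common vertex, so transitivity connects all edges of
   level 0, and following a point through the levels joins every edge and
   vertex to level 0. *)

Section PermOrbits.
Variable T : finType.
Implicit Types (s : {perm T}) (a b c x y z : T) (A B : {set T}).

Lemma porbitsP s A : reflect (exists z, A = porbit s z) (A \in porbits s).
Proof. by apply: (iffP imsetP) => [[z _ ->]|[z ->]]; exists z. Qed.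

Lemma mem_porbits s z : porbit s z \in porbits s.
Proof. exact: imset_f. Qed.

Lemma porbitI_eq0 s a c : porbit s a != porbit s c -> porbit s a :&: porbit s c = set0.
Proof.
move=> ne_ac; apply/setP => z; rewrite !inE; apply/andP => -[za zc].
case/negP: ne_ac; have /eqP <- : porbit s z == porbit s a by rewrite eq_porbit_mem.
by rewrite eq_porbit_mem.
Qed.

Lemma porbit_tpermM_id s a b z : a \notin porbit s z -> b \notin porbit s z ->
  porbit (tperm a b * s) z = porbit s z.
Proof.
move=> az bz.
have fixE w : w \in porbit s z -> (tperm a b * s)%g w = s w.
  move=> wz; rewrite permM tpermD //.
    by apply: contraNneq az => ->.
  by apply: contraNneq bz => ->.
have expE m : ((tperm a b * s) ^+ m)%g z = (s ^+ m)%g z.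
  elim: m => [|m IHm]; first by rewrite !expg0.
  by rewrite expgSr permM IHm fixE ?mem_porbit // expgSr permM.
by apply/setP => w; apply/porbitP/porbitP => -[i ->]; exists i; rewrite expE.
Qed.

Lemma porbit_tpermMU s a b :
  porbit (tperm a b * s) a :|: porbit (tperm a b * s) b = porbit s a :|: porbit s b.
Proof.
suff sub t : porbit (tperm a b * t) a :|: porbit (tperm a b * t) b
             \subset porbit t a :|: porbit t b.
  by apply/eqP; rewrite eqEsubset sub /=; have := sub (tperm a b * s)%g; rewrite tpermKg.
apply/subsetP => w; apply: contraTT; rewrite !inE !(porbit_sym _ w) !negb_or.
by case/andP => aw bw; rewrite porbit_tpermM_id ?aw.
Qed.

(* Applying [porbits_mul_tperm] to s and to (x y) s, the two changes of the
   number of cycles must cancel. *)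
Lemma mem_porbit_tpermM s x y : x != y ->
  (x \in porbit (tperm x y * s) y) = (x \notin porbit s y).
Proof.
move=> ne_xy; have := porbits_mul_tperm (tperm x y * s) x y.
have := porbits_mul_tperm s x y; rewrite /= tpermKg ne_xy.
by case: (x \in porbit (tperm x y * s) y); case: (x \in porbit s y) => //= ? ?; lia.
Qed.

Lemma not_disjoint_set2 A a b : ~~ [disjoint A & [set a; b]] = (a \in A) || (b \in A).
Proof.
by rewrite disjoint_sym disjoints_subset !subUset !sub1set !inE negb_and !negbK.
Qed.

Lemma not_disjoint_set4 A a b c d :
  ~~ [disjoint A & [set a; b; c; d]] = [|| a \in A, b \in A, c \in A | d \in A].
Proof.
by rewrite disjoint_sym disjoints_subset !subUset !sub1set !inE !negb_and !negbK !orbA.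
Qed.

Lemma card_porbit_pair s a c : #|[set porbit s a; porbit s c]| = (c \notin porbit s a).+1.
Proof. by rewrite cards2 eq_porbit_mem porbit_sym. Qed.

Lemma sum_card_porbit_pair s a c :
  \sum_(A in [set porbit s a; porbit s c]) #|A| = #|porbit s a :|: porbit s c|.
Proof.
have [->|ne_ac] := eqVneq (porbit s a) (porbit s c); first by rewrite !setUid big_set1.
by rewrite big_setU1 ?inE // big_set1 cardsU porbitI_eq0 // cards0 subn0.
Qed.

Lemma porbits_filter2 s A B (P : pred {set T}) :
  (forall z, P (porbit s z) = (porbit s z == A) || (porbit s z == B)) ->
  A \in porbits s -> B \in porbits s -> [set O in porbits s | P O] = [set A; B].
Proof.
move=> PE AO BO; apply/setP => O; rewrite !inE.
apply/andP/orP => [[/porbitsP[z ->]]|]; first by rewrite PE => /orP.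
case=> /eqP ->; [case/porbitsP: AO | case/porbitsP: BO] => z Ez;
  by split; rewrite Ez ?mem_porbits // PE -Ez eqxx ?orbT.
Qed.

Lemma porbits_filter1 s A (P : pred {set T}) :
  (forall z, P (porbit s z) = (porbit s z == A)) ->
  A \in porbits s -> [set O in porbits s | P O] = [set A].
Proof.
move=> PE AO; rewrite -[[set A]]setUid; apply: porbits_filter2 => // z.
by rewrite orbb.
Qed.

End PermOrbits.

Section Precedes.
Variable N : nat.
Implicit Types A B : {set 'I_N}.

Definition precedes A B : bool := [exists z in A, [forall w in B, z < w]].

Lemma precedes_min A B m : [disjoint A & B] -> m \in A ->
  (forall w, w \in A :|: B -> m <= w) -> precedes A B && ~~ precedes B A.
Proof.
move=> dAB mA m_min; apply/andP; split.
  apply/existsP; exists m; rewrite mA; apply/forallP => w; apply/implyP => wB.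
  rewrite ltn_neqAle m_min ?inE ?wB ?orbT // andbT.
  by apply: contraTneq wB => /val_inj <-; rewrite (disjointFr dAB mA).
apply/existsP => -[z /andP[zB /forallP /(_ m)]].
by rewrite mA /= ltnNge m_min // inE zB orbT.
Qed.

Lemma precedes_xor A B z : [disjoint A & B] -> z \in A -> precedes A B != precedes B A.
Proof.
move=> dAB zA; have zAB : z \in A :|: B by rewrite inE zA.
case: (arg_minnP val zAB) => m mAB m_min.
case/setUP: mAB => [mA|mB].
  by case/andP: (precedes_min dAB mA m_min) => -> ->.
rewrite disjoint_sym in dAB; rewrite setUC in m_min.
by case/andP: (precedes_min dAB mB m_min) => -> /negbTE ->.
Qed.

End Precedes.

Section Tau.
Variable n : nat.
Local Notation T := ('I_(n + n)).
Local Notation tau := (@tauf n).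
Implicit Types (r : {perm T}) (x y z u : T) (A : {set T}).

Lemma tauK : involutive tau.
Proof. by move=> i; apply: val_inj; rewrite /= modnDml -addnA modnDr modn_small. Qed.

Lemma tau_inj : injective tau. Proof. exact: inv_inj tauK. Qed.

Lemma tau_neq (n_gt0 : 0 < n) z : tau z != z.
Proof.
apply/eqP => /(congr1 val) /=; have := ltn_ord z.
have [lt_zn|le_nz] := ltnP z n => z_lt.
  by rewrite modn_small; lia.
have -> : (z + n = (z - n) + (n + n))%N by lia.
by rewrite modnDr modn_small; lia.
Qed.

Lemma mem_tau_set A z : (z \in tau_set A) = (tau z \in A).
Proof.
apply/imsetP/idP => [[w wA ->]|tzA]; first by rewrite tauK.
by exists (tau z); rewrite ?tauK.
Qed.

Lemma tau_setK : involutive (@tau_set n).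
Proof. by move=> A; apply/setP => z; rewrite !mem_tau_set tauK. Qed.

Lemma card_tau_set A : #|tau_set A| = #|A|.
Proof. exact/card_imset/tau_inj. Qed.

Lemma tau_tperm x y z : tau (tperm x y z) = tperm (tau x) (tau y) (tau z).
Proof. exact/inj_tperm/tau_inj. Qed.

Lemma Ctilde_tau r u : in_Ctilde r -> r (tau u) = tau ((r^-1)%g u).
Proof. by move=> Cr; rewrite -Cr tauK. Qed.

Lemma Ctilde_inv r : in_Ctilde r -> in_Ctilde (r^-1)%g.
Proof.
move=> Cr i; rewrite invgK.
have rtr : r (tau (r i)) = tau i by rewrite Ctilde_tau // permK.
by rewrite -rtr permK tauK.
Qed.

Lemma Ctilde_expg r m u : in_Ctilde r -> (r ^+ m)%g (tau u) = tau ((r^-1 ^+ m)%g u).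
Proof.
move=> Cr; elim: m => [|m IHm]; first by rewrite !expg0 !perm1.
by rewrite !expgSr !permM IHm Ctilde_tau.
Qed.

Lemma porbit_tau r z : in_Ctilde r -> porbit r (tau z) = tau_set (porbit r z).
Proof.
move=> Cr; apply/setP => w; rewrite mem_tau_set -[in RHS]porbitV.
apply/porbitP/porbitP => -[m wE]; exists m.
  by rewrite wE Ctilde_expg // tauK.
by rewrite -(tauK w) wE Ctilde_expg.
Qed.

Lemma porbit_tau_sym r x y : in_Ctilde r -> (tau y \in porbit r x) = (y \in porbit r (tau x)).
Proof. by move=> Cr; rewrite porbit_tau // mem_tau_set. Qed.

Lemma mem_porbit_tau r x y : in_Ctilde r -> (tau y \in porbit r (tau x)) = (y \in porbit r x).
Proof. by move=> Cr; rewrite porbit_tau // mem_tau_set tauK. Qed.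

Lemma porbit_tauU r x y : in_Ctilde r ->
  porbit r (tau x) :|: porbit r (tau y) = tau_set (porbit r x :|: porbit r y).
Proof. by move=> Cr; rewrite !porbit_tau // /tau_set imsetU. Qed.

Lemma tau_set_porbits r A : in_Ctilde r -> A \in porbits r -> tau_set A \in porbits r.
Proof. by move=> Cr /porbitsP[z ->]; rewrite -porbit_tau // mem_porbits. Qed.

(* The pointwise form of membership in B~_n: unlike [in_Btilde], it is visibly
   preserved by the steps [tstep]. *)
Definition in_Btilde_pt r := in_Ctilde r /\ forall z, r z != tau z.

(* If tau z = r^a z, then r^i z and r^(i + odd a) z are exchanged by tau for
   i = a./2, so r maps some point to its tau-partner or tau has a fixed point. *)
Lemma tau_notin_porbit (n_gt0 : 0 < n) r z : in_Btilde_pt r -> tau z \notin porbit r z.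
Proof.
move=> [Cr r_neq]; apply/negP => /porbitP[a tz_eq].
set i := a./2; set o := odd a.
have a_eq : a = (i + o + i)%N by have := odd_double_half a; rewrite /i /o; lia.
have tau_r : tau ((r ^+ i)%g z) = (r ^+ (i + o))%g z.
  have := Ctilde_expg i z (Ctilde_inv Cr); rewrite invgK => <-.
  by rewrite tz_eq a_eq -permM expgD -mulgA expgVn mulgV mulg1.
move: tau_r; rewrite /o; case: (odd a) => /= tau_r.
  by have := r_neq ((r ^+ i)%g z); rewrite tau_r addn1 expgSr permM eqxx.
by have := tau_neq n_gt0 ((r ^+ i)%g z); rewrite tau_r addn0 eqxx.
Qed.

Lemma card_porbitU_tau (n_gt0 : 0 < n) r x : in_Btilde_pt r ->
  #|porbit r x :|: porbit r (tau x)| = #|porbit r x|.*2.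
Proof.
move=> Br; have [Cr _] := Br.
rewrite cardsU porbitI_eq0 ?cards0 ?subn0 ?porbit_tau ?card_tau_set -?addnn //.
by rewrite -porbit_tau // eq_porbit_mem porbit_sym tau_notin_porbit.
Qed.

Lemma in_Btilde_pt_noself (n_gt0 : 0 < n) r A :
  in_Btilde_pt r -> A \in porbits r -> ~~ self_symmetric A.
Proof.
move=> Br /porbitsP[z ->]; rewrite /self_symmetric -porbit_tau; last by case: Br.
by rewrite eq_porbit_mem tau_notin_porbit.
Qed.

Lemma in_Btilde_ptW r : in_Btilde r -> in_Btilde_pt r.
Proof.
move=> [Cr noself]; split => // z; apply/eqP => rz.
have := noself _ (mem_porbits r z).
by rewrite /self_symmetric -porbit_tau // eq_porbit_mem -rz -{1}(expg1 r) mem_porbit.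
Qed.

Lemma tstepE r (xy : T * T) z :
  tstep r xy z = tperm xy.1 xy.2 (r (tperm (tau xy.1) (tau xy.2) z)).
Proof. by rewrite /tstep !permM. Qed.

Lemma in_Btilde_pt_tstep r xy : in_Btilde_pt r -> in_Btilde_pt (tstep r xy).
Proof.
case: xy => x y [Cr r_neq]; split.
  move=> i; rewrite tstepE /tstep !invMg !tpermV !permM /=.
  by rewrite -{1}(tauK x) -{1}(tauK y) -tau_tperm tauK Ctilde_tau // tau_tperm !tauK.
move=> z; rewrite tstepE /=; apply: contra (r_neq (tperm (tau x) (tau y) z)) => /eqP E.
by rewrite tau_tperm !tauK -E tpermK.
Qed.

Lemma in_Btilde_pt_foldl r l : in_Btilde_pt r -> in_Btilde_pt (foldl (@tstep n) r l).
Proof. by elim: l r => //= xy l IHl r Br; apply/IHl/in_Btilde_pt_tstep. Qed.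

End Tau.

Section Step.
Variable n : nat.
Local Notation T := ('I_(n + n)).
Local Notation tau := (@tauf n).
Implicit Types (r : {perm T}) (x y z : T).

Lemma porbit_tstep r x y z :
  porbit (tstep r (x, y)) z = porbit (tperm x y * (tperm (tau x) (tau y) * r)^-1)%g z.
Proof. by rewrite -porbitV /tstep /= invMg tpermV. Qed.

Lemma tstepK r x y : tstep (tstep r (x, y)) (x, y) = r.
Proof. by rewrite /tstep /= !mulgA tperm2 mul1g -mulgA tperm2 mulg1. Qed.

Lemma porbit_tstep_id r x y z :
  x \notin porbit r z -> y \notin porbit r z ->
  tau x \notin porbit r z -> tau y \notin porbit r z ->
  porbit (tstep r (x, y)) z = porbit r z.
Proof.
by move=> *; rewrite porbit_tstep porbit_tpermM_id porbitV ?porbit_tpermM_id.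
Qed.

Lemma porbit_tstep_id_new r x y z :
  x \notin porbit (tstep r (x, y)) z -> y \notin porbit (tstep r (x, y)) z ->
  tau x \notin porbit (tstep r (x, y)) z -> tau y \notin porbit (tstep r (x, y)) z ->
  porbit r z = porbit (tstep r (x, y)) z.
Proof. by move=> *; rewrite -{1}(tstepK r x y) porbit_tstep_id. Qed.

Variable n_gt0 : 0 < n.

Section NotCaseC.
Variables (r : {perm T}) (x y : T).
Hypotheses (Br : in_Btilde_pt r) (ne_xy : x != y) (notC : y \notin porbit r (tau x)).

Let m := (tperm (tau x) (tau y) * r)%g.

Let porbit_m_x : porbit m x = porbit r x.
Proof.
apply: porbit_tpermM_id; first exact: tau_notin_porbit.
by rewrite porbit_tau_sym //; case: Br.
Qed.

Let porbit_m_y : porbit m y = porbit r y.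
Proof. by apply: porbit_tpermM_id; rewrite ?tau_notin_porbit // porbit_sym. Qed.

Lemma porbit_tstepU :
  porbit (tstep r (x, y)) x :|: porbit (tstep r (x, y)) y = porbit r x :|: porbit r y.
Proof. by rewrite !porbit_tstep porbit_tpermMU !porbitV porbit_m_x porbit_m_y. Qed.

Lemma mem_porbit_tstep : (y \in porbit (tstep r (x, y)) x) = (y \notin porbit r x).
Proof. by rewrite porbit_sym porbit_tstep mem_porbit_tpermM // porbitV porbit_m_y porbit_sym. Qed.

Lemma tstep_notC : y \notin porbit (tstep r (x, y)) (tau x).
Proof.
have [Cr' _] := in_Btilde_pt_tstep (x, y) Br.
rewrite -porbit_tau_sym //; apply/negP => tyx.
have : tau y \in porbit (tstep r (x, y)) x :|: porbit (tstep r (x, y)) y by rewrite inE tyx.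
rewrite porbit_tstepU inE porbit_tau_sym ?(negbTE notC); last by case: Br.
by rewrite (negbTE (tau_notin_porbit _ _ Br)).
Qed.

End NotCaseC.

Section CaseC.
Variables (r : {perm T}) (x y : T).
Hypotheses (Br : in_Btilde_pt r) (ne_xy : x != y) (isC : y \in porbit r (tau x)).

Let m := (tperm (tau x) (tau y) * r)%g.

Let porbit_ty : porbit r (tau y) = porbit r x.
Proof. by apply/eqP; rewrite eq_porbit_mem porbit_tau_sym //; case: Br. Qed.

Let porbit_m_tx : porbit m (tau x) = porbit r x :|: porbit r (tau x).
Proof.
have ne_t : tau x != tau y by apply: contra ne_xy => /eqP/tau_inj ->.
have tx_ty : porbit m (tau x) = porbit m (tau y).
  by apply/eqP; rewrite eq_porbit_mem mem_porbit_tpermM // porbit_ty tau_notin_porbit.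
by have := porbit_tpermMU r (tau x) (tau y); rewrite -/m -tx_ty setUid porbit_ty setUC.
Qed.

Let porbit_m_xy : porbit m x = porbit r x :|: porbit r (tau x)
               /\ porbit m y = porbit r x :|: porbit r (tau x).
Proof.
by split; apply/eqP; rewrite -porbit_m_tx eq_porbit_mem porbit_m_tx inE ?porbit_id ?isC ?orbT.
Qed.

Let porbit_tstepU_xy :
  porbit (tstep r (x, y)) x :|: porbit (tstep r (x, y)) y = porbit r x :|: porbit r (tau x).
Proof.
by case: porbit_m_xy => Ex Ey; rewrite !porbit_tstep porbit_tpermMU !porbitV Ex Ey setUid.
Qed.

Lemma tstep_C : y \in porbit (tstep r (x, y)) (tau x).
Proof.
have Br' := in_Btilde_pt_tstep (x, y) Br.
have : tau x \in porbit (tstep r (x, y)) x :|: porbit (tstep r (x, y)) y.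
  by rewrite porbit_tstepU_xy !inE porbit_id orbT.
by rewrite inE (negbTE (tau_notin_porbit n_gt0 x Br')) /= porbit_sym.
Qed.

Lemma porbit_tstepU_C :
  porbit (tstep r (x, y)) x :|: porbit (tstep r (x, y)) (tau x) = porbit r x :|: porbit r (tau x).
Proof.
have -> : porbit (tstep r (x, y)) (tau x) = porbit (tstep r (x, y)) y.
  by apply/eqP; rewrite eq_porbit_mem porbit_sym tstep_C.
exact: porbit_tstepU_xy.
Qed.

End CaseC.

End Step.

Section TauPairs.
Variable n : nat.
Hypothesis n_gt0 : 0 < n.
Local Notation T := ('I_(n + n)).
Implicit Types (q : {perm T}) (O : {set T}).

Definition tau_reps q := [set O in porbits q | precedes O (tau_set O)].

Lemma tau_reps_xor q O : in_Btilde_pt q -> O \in porbits q ->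
  (O \in tau_reps q) != (tau_set O \in tau_reps q).
Proof.
move=> Bq /porbitsP[z ->]; have Cq : in_Ctilde q by case: Bq.
rewrite !inE -porbit_tau // !mem_porbits /= porbit_tau // tau_setK.
apply: (@precedes_xor _ _ _ z); last exact: porbit_id.
rewrite -setI_eq0 -porbit_tau // porbitI_eq0 //.
by rewrite eq_porbit_mem porbit_sym tau_notin_porbit.
Qed.

Lemma count_map_card (S : {set {set T}}) (P : pred nat) :
  count P (map (fun O : {set T} => #|O|) (enum S)) = #|[set O in S | P #|O|]|.
Proof.
rewrite count_map -sum1_count big_enum_cond -sum1_card.
by apply: eq_bigl => O; rewrite !inE.
Qed.

Lemma card_porbits_cycle_type q : #|porbits q| = size (cycle_type q).
Proof. by rewrite /cycle_type size_map -cardE. Qed.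

Lemma mem_imset_tau_set (S : {set {set T}}) O : (O \in (@tau_set n) @: S) = (tau_set O \in S).
Proof.
apply/imsetP/idP => [[O' O'S ->]|tOS]; first by rewrite tau_setK.
by exists (tau_set O); rewrite ?tau_setK.
Qed.

Lemma count_cycle_type q (P : pred nat) : in_Btilde_pt q ->
  count P (cycle_type q) = 2 * count P (map (fun O : {set T} => #|O|) (enum (tau_reps q))).
Proof.
move=> Bq; have Cq : in_Ctilde q by case: Bq.
rewrite /cycle_type !count_map_card -(cardsID (tau_reps q)).
have -> : [set O in porbits q | P #|O|] :&: tau_reps q = [set O in tau_reps q | P #|O|].
  by apply/setP => O; rewrite !inE; case: (O \in porbits q); rewrite ?andbF // andbC.
have -> : [set O in porbits q | P #|O|] :\: tau_reps q =
          (@tau_set n) @: [set O in tau_reps q | P #|O|].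
  apply/setP => O; rewrite mem_imset_tau_set !inE card_tau_set.
  have [Oq|Oq] /= := boolP (O \in porbits q).
    have := tau_reps_xor Bq Oq; rewrite !inE Oq tau_set_porbits //=.
    by case: (precedes _ _); case: (precedes _ _); case: (P _).
  case: (boolP (tau_set O \in porbits q)) => //= tOq.
  by move: Oq; rewrite -(tau_setK O) tau_set_porbits.
by rewrite card_imset ?mul2n -?addnn //; apply: (inv_inj (@tau_setK n)).
Qed.

Lemma cycle_type_pairs q (nu : seq nat) :
  in_Btilde_pt q -> perm_eq (cycle_type q) (nu ++ nu) ->
  exists c : 'I_(size nu) -> {set T},
    [/\ forall i, c i \in porbits q, forall i, #|c i| = nth 0 nu i &
        forall O, O \in porbits q -> exists i, O = c i \/ O = tau_set (c i)].
Proof.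
move=> Bq ct_q; have Cq : in_Ctilde q by case: Bq.
set reps := enum (tau_reps q); set M := map (fun O : {set T} => #|O|) reps.
have nu_M : perm_eq nu M.
  apply/seq.permP => P; move/seq.permP: ct_q => /(_ P).
  by rewrite count_cycle_type // count_cat (addnn (count P nu)) -mul2n => /eqP; rewrite eqn_mul2l => /eqP.
case/(perm_iotaP 0): nu_M => Is Is_iota nuE.
have size_Is : size Is = size nu by rewrite nuE size_map.
have size_M : size M = size reps by rewrite size_map.
pose c (i : 'I_(size nu)) := nth set0 reps (nth 0 Is i).
have Is_lt (i : 'I_(size nu)) : nth 0 Is i < size reps.
  have : nth 0 Is i \in Is by rewrite mem_nth // size_Is.
  by rewrite (perm_mem Is_iota) mem_iota size_M.
exists c; split.
- move=> i; have : c i \in reps by apply: mem_nth.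
  by rewrite mem_enum inE => /andP[].
- move=> i; have -> : nth 0 nu i = nth 0 (map (nth 0 M) Is) i by rewrite -nuE.
  by rewrite (nth_map 0) ?size_Is // (nth_map set0).
move=> O Oq.
have [O' O'reps O_eq] : exists2 O', O' \in tau_reps q & O = O' \/ O = tau_set O'.
  have := tau_reps_xor Bq Oq; case: (boolP (O \in tau_reps q)) => [OR|_] /=.
    by exists O => //; left.
  by rewrite negbK => tOR; exists (tau_set O) => //; right; rewrite tau_setK.
have j_Is : index O' reps \in Is by rewrite (perm_mem Is_iota) mem_iota /= size_M index_mem mem_enum.
have i_lt : index (index O' reps) Is < size nu by rewrite -size_Is index_mem.
exists (Ordinal i_lt).
by rewrite /c /= nth_index // nth_index ?mem_enum.
Qed.

End TauPairs.

Section Construction.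
Variables (n b : nat) (s1 : {perm 'I_(n + n)}) (etas : b.-tuple ('I_(n + n) * 'I_(n + n))).
Local Notation T := ('I_(n + n)).
Local Notation tau := (@tauf n).
Hypothesis n_gt0 : 0 < n.
Hypothesis s1_pt : in_Btilde_pt s1.
Hypothesis etas_neq : forall k : 'I_b, (tnth etas k).1 != (tnth etas k).2.

Local Notation rho k := (rho s1 etas k).
Local Notation X k := (tnth etas k).1.
Local Notation Y k := (tnth etas k).2.
Local Notation cVt := (cV s1 etas).
Local Notation cEt := (cE s1 etas).

Lemma rho_pt k : in_Btilde_pt (rho k).
Proof. exact: in_Btilde_pt_foldl. Qed.

Lemma rho_Ctilde k : in_Ctilde (rho k).
Proof. by case: (rho_pt k). Qed.

Local Hint Resolve rho_pt rho_Ctilde etas_neq : core.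

Lemma rhoS (k : 'I_b) : rho k.+1 = tstep (rho k) (X k, Y k).
Proof.
rewrite /Defs.rho (take_nth (X k, Y k)) ?size_tuple // foldl_rcons -tnth_nth.
by case: (tnth etas k).
Qed.

Lemma rho0 : rho 0 = s1. Proof. by rewrite /Defs.rho take0. Qed.

Lemma touchedE (k : 'I_b) O : touched etas k O =
  [|| X k \in O, Y k \in O, tau (X k) \in O | tau (Y k) \in O].
Proof. by rewrite /touched /Sset /sdat not_disjoint_set4. Qed.

Lemma sideE (k : 'I_b) O :
  side s1 etas k O = [|| Y k \in porbit (rho k) (tau (X k)), X k \in O | Y k \in O].
Proof. by rewrite /side /caseC /sdat not_disjoint_set2. Qed.

Lemma caseCE (k : 'I_b) : caseC s1 etas k = (Y k \in porbit (rho k) (tau (X k))).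
Proof. by []. Qed.

Lemma porbit_rhoS_id (k : 'I_b) z : ~~ touched etas k (porbit (rho k) z) ->
  porbit (rho k.+1) z = porbit (rho k) z.
Proof. by rewrite touchedE !negb_or rhoS => /and4P[*]; rewrite porbit_tstep_id. Qed.

Lemma porbit_rhoS_id_new (k : 'I_b) z : ~~ touched etas k (porbit (rho k.+1) z) ->
  porbit (rho k) z = porbit (rho k.+1) z.
Proof. by rewrite touchedE !negb_or rhoS => /and4P[*]; apply: porbit_tstep_id_new. Qed.

(* The raw vertex over p_(k+1) at which the edge of the cycle O of rho_k ends,
   which is also where the edge of O, read as a cycle of rho_(k+1), starts. *)
Definition rawv_at (k : 'I_b) (O : {set T}) : rawV n b :=
  if touched etas k O then inl (k, side s1 etas k O) else inr (k, O).

Definition rawV_step (v : rawV n b) : 'I_b :=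
  match v with inl (k, _) | inr (k, _) => k end.

Definition attached (v : rawV n b) : pred {set T} :=
  match v with
  | inl (k, s) => fun O => touched etas k O && (side s1 etas k O == s)
  | inr (k, A) => fun O => ~~ touched etas k O && (O == A)
  end.

Lemma rawv_atE (k : 'I_b) O v : (rawv_at k O == v) = (k == rawV_step v) && attached v O.
Proof.
case: v => [[k' s]|[k' A]]; rewrite /rawv_at /=; have [<-|ne_k] := eqVneq k k';
  by case: ifP => tO //=; rewrite -sum_eqE /= xpair_eqE ?eqxx ?(negbTE ne_k).
Qed.

Lemma rawv_at_valid (k : 'I_b) O :
  O \in porbits (rho k) \/ O \in porbits (rho k.+1) -> validV s1 etas (rawv_at k O).
Proof.
rewrite /rawv_at; case: ifP => tO /=; first by rewrite /side; case: caseC.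
rewrite tO andbT; case=> [//|/porbitsP[z EO]]; subst O.
by rewrite -porbit_rhoS_id_new ?tO ?mem_porbits.
Qed.

Lemma vertex_atE (k : 'I_b) O :
  O \in porbits (rho k) \/ O \in porbits (rho k.+1) ->
  exists2 u, vertex_at s1 etas k O = Some u & val u = rawv_at k O.
Proof.
move=> O_rho; rewrite /vertex_at valK -/(rawv_at k O).
by case: insubP => [u _ uE|]; [exists u | rewrite rawv_at_valid].
Qed.

Lemma c_tgt_eqSome (e : cEt) (v : cVt) :
  (c_tgt e == Some v) = (val (val e).1 == rawV_step (val v)) && attached (val v) (val e).2.
Proof.
rewrite /c_tgt; have [j_lt|j_ge] := ltnP (val (val e).1) b.
  have [u -> uE] := @vertex_atE (Ordinal j_lt) _ (or_introl (valP e)).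
  by rewrite (_ : (Some u == Some v) = (val u == val v)) // uE rawv_atE.
rewrite /vertex_at insubF ?ltnNge ?j_ge //; apply/esym/negbTE.
by apply: contraL j_ge => /andP[/eqP-> _]; rewrite -ltnNge.
Qed.

Lemma c_src_eqSome (e : cEt) (v : cVt) :
  (c_src e == Some v) = (val (val e).1 == (rawV_step (val v)).+1) && attached (val v) (val e).2.
Proof.
rewrite /c_src; case: (val e) (valP e) => -[[|j] j_lt] O //= O_rho.
have j_lt' : j < b by [].
have [u -> uE] := @vertex_atE (Ordinal j_lt') O (or_intror O_rho).
by rewrite (_ : (Some u == Some v) = (val u == val v)) // uE rawv_atE.
Qed.

Definition edges_at (j : nat) (P : pred {set T}) : {set cEt} :=
  [set e : cEt | (val (val e).1 == j) && P (val e).2].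

Definition cycle_of (e : cEt) : {set T} := (val e).2.

Lemma imset_cycle_of (j : nat) (P : pred {set T}) : j < b.+1 ->
  cycle_of @: edges_at j P = [set O in porbits (rho j) | P O].
Proof.
move=> j_lt; apply/setP => O; apply/imsetP/idP.
  move=> [e]; rewrite inE => /andP[/eqP ej PO] ->.
  by rewrite inE PO andbT /cycle_of -ej; apply: (valP e).
rewrite inE => /andP[O_rho PO].
have eP : validE s1 etas (Ordinal j_lt, O) by [].
by exists (exist _ (Ordinal j_lt, O) eP); rewrite // inE /= eqxx.
Qed.

Lemma cycle_of_inj (j : nat) (P : pred {set T}) : {in edges_at j P &, injective cycle_of}.
Proof.
move=> [[j1 O1] e1P] [[j2 O2] e2P]; rewrite !inE /= => /andP[/eqP ej1 _] /andP[/eqP ej2 _].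
rewrite /cycle_of /= => EO; apply: val_inj; congr pair => //.
by apply: val_inj; rewrite /= ej1 ej2.
Qed.

Lemma card_edges_at (j : nat) (P : pred {set T}) : j < b.+1 ->
  #|edges_at j P| = #|[set O in porbits (rho j) | P O]|.
Proof. by move=> j_lt; rewrite -imset_cycle_of // card_in_imset //; apply: cycle_of_inj. Qed.

Lemma sum_edges_at (j : nat) (P : pred {set T}) (F : {set T} -> nat) : j < b.+1 ->
  \sum_(e in edges_at j P) F (cycle_of e) = \sum_(O in [set O in porbits (rho j) | P O]) F O.
Proof. by move=> j_lt; rewrite -imset_cycle_of // big_imset //; apply: cycle_of_inj. Qed.

Definition in_cycles (v : cVt) := [set O in porbits (rho (rawV_step (val v))) | attached (val v) O].
Definition out_cycles (v : cVt) := [set O in porbits (rho (rawV_step (val v)).+1) | attached (val v) O].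

Lemma in_edgesE (v : cVt) :
  [set e | c_tgt e == Some v] = edges_at (rawV_step (val v)) (attached (val v)).
Proof. by apply/setP => e; rewrite !inE c_tgt_eqSome. Qed.

Lemma out_edgesE (v : cVt) :
  [set e | c_src e == Some v] = edges_at (rawV_step (val v)).+1 (attached (val v)).
Proof. by apply/setP => e; rewrite !inE c_src_eqSome. Qed.

Lemma rawV_step_lt (v : cVt) : rawV_step (val v) < b.+1.
Proof. exact/ltnW/ltn_ord. Qed.

Lemma rawV_stepS_lt (v : cVt) : (rawV_step (val v)).+1 < b.+1.
Proof. exact: ltn_ord. Qed.

Lemma card_in_edges (v : cVt) : #|[set e | c_tgt e == Some v]| = #|in_cycles v|.
Proof. by rewrite in_edgesE card_edges_at ?rawV_step_lt. Qed.

Lemma card_out_edges (v : cVt) : #|[set e | c_src e == Some v]| = #|out_cycles v|.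
Proof. by rewrite out_edgesE card_edges_at ?rawV_stepS_lt. Qed.

Lemma sum_in_edges (v : cVt) :
  \sum_(e | c_tgt e == Some v) #|cycle_of e| = \sum_(O in in_cycles v) #|O|.
Proof.
by rewrite -sum_edges_at ?rawV_step_lt //; apply: eq_bigl => e; rewrite inE c_tgt_eqSome.
Qed.

Lemma sum_out_edges (v : cVt) :
  \sum_(e | c_src e == Some v) #|cycle_of e| = \sum_(O in out_cycles v) #|O|.
Proof. by rewrite -sum_edges_at ?rawV_stepS_lt //; apply: eq_bigl => e; rewrite inE c_src_eqSome. Qed.

Lemma cycle_of_in (v : cVt) e : c_tgt e == Some v -> cycle_of e \in in_cycles v.
Proof.
by move=> ev; rewrite /in_cycles /out_cycles -imset_cycle_of ?rawV_step_lt //; apply: imset_f; rewrite -in_edgesE inE.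
Qed.

Lemma cycle_of_out (v : cVt) e : c_src e == Some v -> cycle_of e \in out_cycles v.
Proof. by move=> ev; rewrite /in_cycles /out_cycles -imset_cycle_of ?rawV_stepS_lt //; apply: imset_f; rewrite -out_edgesE inE. Qed.

Section AttachedAtStep.
Variable k : 'I_b.
Local Notation x := (X k).
Local Notation y := (Y k).

Lemma attached_true_notC (q : {perm T}) : ~~ caseC s1 etas k -> forall z,
  attached (inl (k, true)) (porbit q z) = (porbit q z == porbit q x) || (porbit q z == porbit q y).
Proof.
move=> notC z /=; rewrite touchedE sideE -caseCE (negbTE notC) /= eqb_id !eq_porbit_mem.
rewrite !(porbit_sym q z).
by case: (x \in _); case: (y \in _); rewrite /= ?andbF ?andbT ?orbT.
Qed.

Lemma porbit_tau_xy_separate (q : {perm T}) z : in_Btilde_pt q -> y \notin porbit q (tau x) ->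
  (tau x \in porbit q z) || (tau y \in porbit q z) -> ~~ ((x \in porbit q z) || (y \in porbit q z)).
Proof.
move=> Bq notC; have Cq : in_Ctilde q by case: Bq.
have not_xx := tau_notin_porbit n_gt0 x Bq; have not_yy := tau_notin_porbit n_gt0 y Bq.
have not_xy : tau y \notin porbit q x by rewrite porbit_tau_sym.
have not_yx : tau x \notin porbit q y by rewrite porbit_sym.
rewrite -!eq_porbit_mem => /orP[] /eqP <-; rewrite !eq_porbit_mem negb_or;
  by rewrite ![_ \in porbit q (tau _)]porbit_sym ?not_xx ?not_yx ?not_xy ?not_yy.
Qed.

Lemma attached_false_notC (q : {perm T}) :
  in_Btilde_pt q -> y \notin porbit q (tau x) -> ~~ caseC s1 etas k -> forall z,
  attached (inl (k, false)) (porbit q z) =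
  (porbit q z == porbit q (tau x)) || (porbit q z == porbit q (tau y)).
Proof.
move=> Bq notCq notC z /=; rewrite touchedE sideE -caseCE (negbTE notC) /= !eq_porbit_mem.
rewrite !(porbit_sym q z); move: (porbit_tau_xy_separate (z := z) Bq notCq).
by case: (x \in _); case: (y \in _); case: (tau x \in _); case: (tau y \in _) => //= /(_ isT).
Qed.

Lemma attached_C (q : {perm T}) : in_Btilde_pt q -> y \in porbit q (tau x) ->
  caseC s1 etas k -> forall z,
  attached (inl (k, true)) (porbit q z) =
  (porbit q z == porbit q x) || (porbit q z == porbit q (tau x)).
Proof.
move=> [Cq _] Cyq C z /=; rewrite touchedE sideE -caseCE C /= andbT.
have Ey : porbit q y = porbit q (tau x) by apply/eqP; rewrite eq_porbit_mem.
have Ety : porbit q (tau y) = porbit q x by apply/eqP; rewrite eq_porbit_mem porbit_tau_sym.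
rewrite -!(porbit_sym q z) -!eq_porbit_mem Ey Ety.
by case: (_ == porbit q x); case: (_ == porbit q (tau x)).
Qed.

Lemma attached_inr (q : {perm T}) A : A \in porbits q -> ~~ touched etas k A ->
  [set O in porbits q | attached (inr (k, A)) O] = [set A].
Proof.
move=> Aq tA; apply: porbits_filter1 => // z /=.
by case: eqP => [->|]; rewrite ?andbT ?andbF.
Qed.

End AttachedAtStep.

Section InlVertex.
Variables (v : cVt) (k : 'I_b) (s : bool).
Hypothesis vE : val v = inl (k, s).
Local Notation x := (X k).
Local Notation y := (Y k).
Local Notation r := (rho k).
Local Notation r' := (rho k.+1).

Lemma cycles_at_notC : ~~ caseC s1 etas k ->
  in_cycles v = (if s then [set porbit r x; porbit r y]
                 else [set porbit r (tau x); porbit r (tau y)])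
  /\ out_cycles v = (if s then [set porbit r' x; porbit r' y]
                     else [set porbit r' (tau x); porbit r' (tau y)]).
Proof.
move=> notC; rewrite /in_cycles /out_cycles vE /=.
have notC' : y \notin porbit r' (tau x) by rewrite rhoS tstep_notC //.
by case: s vE => _; split; apply: porbits_filter2; rewrite ?mem_porbits //;
  [apply: attached_true_notC | apply: attached_true_notC
  | apply: attached_false_notC | apply: attached_false_notC].
Qed.

Lemma cycles_at_C : caseC s1 etas k ->
  in_cycles v = [set porbit r x; porbit r (tau x)]
  /\ out_cycles v = [set porbit r' x; porbit r' (tau x)].
Proof.
move=> C; have s_true : s by move: (valP v); rewrite vE /= C.
have C' : y \in porbit r' (tau x) by rewrite rhoS tstep_C //.
rewrite /in_cycles /out_cycles vE s_true /=.
by split; apply: porbits_filter2; rewrite ?mem_porbits //; apply: attached_C; rewrite //.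
Qed.

Lemma valence_inl : #|out_cycles v| + #|in_cycles v| = if caseC s1 etas k then 4 else 3.
Proof.
have Cr := rho_Ctilde k; have Cr' := rho_Ctilde k.+1.
case: ifP => [C|/negbT notC].
  by have [-> ->] := cycles_at_C C; rewrite !card_porbit_pair !tau_notin_porbit //.
have [-> ->] := cycles_at_notC notC.
have join_cut : (y \in porbit r' x) = (y \notin porbit r x) by rewrite rhoS mem_porbit_tstep //.
by case: s vE => _; rewrite !card_porbit_pair ?mem_porbit_tau // join_cut; case: (y \in _).
Qed.

(* Harmonicity: each step preserves the union of the affected cycles. *)
Lemma harmonic_inl : \sum_(O in out_cycles v) #|O| = \sum_(O in in_cycles v) #|O|.
Proof.
have Cr := rho_Ctilde k; have Cr' := rho_Ctilde k.+1.
have [C|notC] := boolP (caseC s1 etas k).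
  have [-> ->] := cycles_at_C C.
  by rewrite !sum_card_porbit_pair rhoS porbit_tstepU_C //.
have [-> ->] := cycles_at_notC notC.
have U : porbit r' x :|: porbit r' y = porbit r x :|: porbit r y.
  by rewrite rhoS porbit_tstepU //.
by case: s vE => _; rewrite !sum_card_porbit_pair ?porbit_tauU // U.
Qed.

End InlVertex.

Lemma cycles_at_inr (v : cVt) (k : 'I_b) (A : {set T}) : val v = inr (k, A) ->
  in_cycles v = [set A] /\ out_cycles v = [set A].
Proof.
move=> vE; have := valP v; rewrite vE /= => /andP[A_r tA].
rewrite /in_cycles /out_cycles vE /=; split; apply: attached_inr => //.
by case/porbitsP: A_r tA => z -> tA; rewrite -porbit_rhoS_id ?mem_porbits.
Qed.

Definition vdeg (v : cVt) : nat :=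
  match val v with inr _ => 2 | inl (k, _) => if caseC s1 etas k then 4 else 3 end.

Lemma valence_vdeg (v : cVt) :
  #|[set e | c_src e == Some v]| + #|[set e | c_tgt e == Some v]| = vdeg v.
Proof.
rewrite card_in_edges card_out_edges /vdeg.
case vE: (val v) => [[k s]|[k A]]; first exact: valence_inl vE.
by have [-> ->] := cycles_at_inr vE; rewrite cards1.
Qed.

Lemma harmonic_construction (v : cVt) :
  \sum_(e | c_tgt e == Some v) #|cycle_of e| = \sum_(e | c_src e == Some v) #|cycle_of e|.
Proof.
rewrite sum_in_edges sum_out_edges.
case vE: (val v) => [[k s]|[k A]]; first by rewrite (harmonic_inl vE).
by have [-> ->] := cycles_at_inr vE.
Qed.

Definition rawV_inv (v : rawV n b) : rawV n b :=
  match v with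
  | inl (k, s) => inl (k, caseC s1 etas k || ~~ s)
  | inr (k, A) => inr (k, tau_set A)
  end.

Lemma touched_tau_set (k : 'I_b) O : touched etas k (tau_set O) = touched etas k O.
Proof.
rewrite !touchedE !mem_tau_set !tauK.
by case: (X k \in O); case: (Y k \in O); case: (tau (X k) \in O); case: (tau (Y k) \in O).
Qed.

Lemma val_c_iv (v : cVt) : val (c_iv v) = rawV_inv (val v).
Proof.
rewrite /c_iv /insubd (_ : match val v with inl _ => _ | inr _ => _ end = rawV_inv (val v));
  last by case: (val v) => [[]|[]].
rewrite insubT //; case: (val v) (valP v) => [[k s]|[k A]] /=; first by case: caseC.
by case/andP=> A_r tA; rewrite touched_tau_set tA andbT tau_set_porbits.
Qed.

Lemma val_c_ie (e : cEt) : val (c_ie e) = ((val e).1, tau_set (val e).2).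
Proof. by rewrite /c_ie /insubd insubT //= /validE tau_set_porbits //; apply: (valP e). Qed.

Lemma c_ivK (v : cVt) : c_iv (c_iv v) = v.
Proof.
apply: val_inj; rewrite !val_c_iv; case: (val v) (valP v) => [[k s]|[k A]] /=.
  by case: caseC; case: s.
by rewrite tau_setK.
Qed.

Lemma c_ieK (e : cEt) : c_ie (c_ie e) = e.
Proof. by apply: val_inj; rewrite !val_c_ie tau_setK; case: (val e). Qed.

Lemma rawv_at_tau_set (k : 'I_b) O : O \in porbits (rho k) \/ O \in porbits (rho k.+1) ->
  rawv_at k (tau_set O) = rawV_inv (rawv_at k O).
Proof.
move=> O_rho; rewrite /rawv_at touched_tau_set; case: ifP => // tO /=.
congr (inl (k, _)); rewrite !sideE -!caseCE.
have [//|notC /=] := boolP (caseC s1 etas k).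
have [q [Bq notCq /porbitsP[z EO]]] :
    exists q, [/\ in_Btilde_pt q, Y k \notin porbit q (tau (X k)) & O \in porbits q].
  case: O_rho => O_rho; [exists (rho k) | exists (rho k.+1)]; split => //.
  by rewrite rhoS tstep_notC.
subst O; rewrite !mem_tau_set; move: tO; rewrite touchedE.
move: (porbit_tau_xy_separate (z := z) Bq notCq).
by case: (X k \in _); case: (Y k \in _); case: (tau (X k) \in _); case: (tau (Y k) \in _)
  => //= /(_ isT).
Qed.

Lemma c_tgt_ie (e : cEt) : c_tgt (c_ie e) = omap (@c_iv n b s1 etas) (c_tgt e).
Proof.
rewrite /c_tgt val_c_ie /=; have [j_lt|j_ge] := ltnP (val (val e).1) b; last first.
  by rewrite /vertex_at insubF ?ltnNge ?j_ge.
have O_rho := valP e; have tO_rho := tau_set_porbits (rho_Ctilde (val e).1) O_rho.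
have [u -> uE] := @vertex_atE (Ordinal j_lt) _ (or_introl O_rho).
have [u' -> u'E] := @vertex_atE (Ordinal j_lt) _ (or_introl tO_rho).
by congr Some; apply: val_inj; rewrite u'E val_c_iv uE rawv_at_tau_set //; left.
Qed.

Lemma c_src_ie (e : cEt) : c_src (c_ie e) = omap (@c_iv n b s1 etas) (c_src e).
Proof.
rewrite /c_src val_c_ie; case: e => -[[[|j] j_lt] O] O_rho //=.
have j_lt' : j < b by [].
have tO_rho := tau_set_porbits (rho_Ctilde j.+1) O_rho.
have [u -> uE] := @vertex_atE (Ordinal j_lt') _ (or_intror O_rho).
have [u' -> u'E] := @vertex_atE (Ordinal j_lt') _ (or_intror tO_rho).
by congr Some; apply: val_inj; rewrite u'E val_c_iv uE rawv_at_tau_set //; right.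
Qed.

Lemma c_ie_neq (e : cEt) : c_ie e != e.
Proof.
apply/eqP => /(congr1 val); rewrite val_c_ie; case: (val e) (valP e) => j O /= O_rho [].
exact/eqP/(in_Btilde_pt_noself n_gt0 (rho_pt j) O_rho).
Qed.

Lemma c_iv_fixed (v : cVt) : c_iv v = v <-> vdeg v = 4.
Proof.
rewrite /vdeg; split.
  move/(congr1 val); rewrite val_c_iv; case: (val v) (valP v) => [[k s]|[k A]] /=.
    by case: caseC; case: s => //= _ [].
  case/andP=> A_r _ [] /eqP; apply: contraTeq => _.
  exact: (in_Btilde_pt_noself n_gt0 (rho_pt k) A_r).
move=> v4; apply: val_inj; rewrite val_c_iv; move: v4.
by case: (val v) (valP v) => [[k s]|[k A]] //=; case: caseC; case: s.
Qed.

Definition edge_of (j : nat) (z : T) : cEt :=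
  Sub ((inord j : 'I_b.+1), porbit (rho (inord j : 'I_b.+1)) z) (mem_porbits _ _).

Lemma val_edge_of (j : nat) z : j <= b -> val (edge_of j z) = (inord j, porbit (rho j) z).
Proof. by move=> j_le; rewrite /edge_of /= inordK. Qed.

Lemma c_tgt_edge_of (k : 'I_b) z :
  exists2 u, c_tgt (edge_of k z) = Some u & val u = rawv_at k (porbit (rho k) z).
Proof.
have [u uE uv] := @vertex_atE k _ (or_introl (mem_porbits (rho k) z)).
by exists u => //; rewrite /c_tgt /edge_of /= inordK // ltnS (ltnW (ltn_ord k)).
Qed.

Lemma c_src_edge_of (k : 'I_b) z :
  exists2 u, c_src (edge_of k.+1 z) = Some u & val u = rawv_at k (porbit (rho k.+1) z).
Proof.
have [u uE uv] := @vertex_atE k _ (or_intror (mem_porbits (rho k.+1) z)).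
by exists u => //; rewrite /c_src /edge_of /= inordK ?ltnS ?ltn_ord.
Qed.

Lemma edge_of_eq (j : nat) a c : j <= b -> porbit (rho j) a = porbit (rho j) c ->
  edge_of j a = edge_of j c.
Proof. by move=> j_le Eac; apply: val_inj; rewrite !val_edge_of // Eac. Qed.

Lemma rawv_at_rhoS (k : 'I_b) z : rawv_at k (porbit (rho k) z) = rawv_at k (porbit (rho k.+1) z).
Proof.
have [tz|/negP tz] := boolP (touched etas k (porbit (rho k) z)); last first.
  by rewrite porbit_rhoS_id //; apply/negP.
have tz' : touched etas k (porbit (rho k.+1) z).
  by apply: contraTT tz => tz'; rewrite porbit_rhoS_id_new.
rewrite /rawv_at tz tz'; congr (inl (k, _)); rewrite !sideE.
have [//|notC /=] := boolP (Y k \in porbit (rho k) (tau (X k))).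
have := congr1 (fun A : {set T} => z \in A) (porbit_tstepU n_gt0 (rho_pt k) notC).
by rewrite -rhoS /= !inE !(porbit_sym _ z).
Qed.

Lemma rawv_at_xy (k : 'I_b) a : a = X k \/ a = Y k -> rawv_at k (porbit (rho k) a) = inl (k, true).
Proof. by rewrite /rawv_at touchedE sideE; case=> ->; rewrite porbit_id ?orbT. Qed.

Lemma rawv_at_tau_xy (k : 'I_b) a : a = tau (X k) \/ a = tau (Y k) ->
  rawv_at k (porbit (rho k) a) = inl (k, caseC s1 etas k).
Proof.
have not_tau := tau_notin_porbit n_gt0 _ (rho_pt k).
rewrite /rawv_at touchedE sideE -caseCE; case=> ->; rewrite porbit_id ?orbT /=.
  by rewrite porbit_sym (negbTE (not_tau _)) orbb.
by rewrite (porbit_sym _ (Y k)) (negbTE (not_tau _)) -{1}(tauK (X k)) mem_porbit_tau // porbit_sym orbF orbb.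
Qed.

Lemma rawv_at_surj (v : cVt) :
  exists z, rawv_at (rawV_step (val v)) (porbit (rho (rawV_step (val v))) z) = val v.
Proof.
case: (val v) (valP v) => [[k [] C]|[k A] /andP[/porbitsP[z ->] tA]] /=.
- by exists (X k); apply: rawv_at_xy; left.
- exists (tau (X k)); rewrite rawv_at_tau_xy; last by left.
  by move: C => /=; case: caseC.
- by exists z; rewrite /rawv_at (negbTE tA).
Qed.

Variables (Rt : realType) (p : nat -> Rt).
Local Notation G := (tgr (construction p s1 etas)).
Local Notation linked := (connect (@incid Rt G)).

Lemma linked_sym : connect_sym (@incid Rt G).
Proof. by apply: sym_connect_sym => -[v|e] [v'|e']. Qed.

Lemma linked_tgt (e : cEt) (u : cVt) : c_tgt e = Some u -> linked (inr e) (inl u).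
Proof. by move=> eu; apply: connect1; rewrite /= eu eqxx orbT. Qed.

Lemma linked_src (e : cEt) (u : cVt) : c_src e = Some u -> linked (inr e) (inl u).
Proof. by move=> eu; apply: connect1; rewrite /= eu eqxx. Qed.

Lemma linked_same_vertex (k : 'I_b) a c :
  rawv_at k (porbit (rho k) a) = rawv_at k (porbit (rho k) c) ->
  linked (inr (edge_of k a)) (inr (edge_of k c)).
Proof.
move=> Eac; have [u ua uE] := c_tgt_edge_of k a; have [u' uc u'E] := c_tgt_edge_of k c.
have Eu : u' = u by apply: val_inj; rewrite uE u'E.
subst u'.
by apply: connect_trans (linked_tgt ua) _; rewrite linked_sym linked_tgt.
Qed.

Lemma linked_edge_ofS (k : 'I_b) z : linked (inr (edge_of k z)) (inr (edge_of k.+1 z)).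
Proof.
have [u uz uE] := c_tgt_edge_of k z; have [u' uz' u'E] := c_src_edge_of k z.
have Eu : u' = u by apply: val_inj; rewrite uE u'E rawv_at_rhoS.
subst u'.
by apply: connect_trans (linked_tgt uz) _; rewrite linked_sym linked_src.
Qed.

Lemma linked_edge_of0 (j : nat) z : j <= b -> linked (inr (edge_of 0 z)) (inr (edge_of j z)).
Proof.
elim: j => [|j IHj] j_lt; first exact: connect0.
exact: connect_trans (IHj (ltnW j_lt)) (linked_edge_ofS (Ordinal j_lt) z).
Qed.

Lemma linked_step_pair (k : 'I_b) a c :
  rawv_at k (porbit (rho k) a) = rawv_at k (porbit (rho k) c) ->
  linked (inr (edge_of 0 a)) (inr (edge_of 0 c)).
Proof.
move=> Eac; have k_le : k <= b := ltnW (ltn_ord k).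
apply: connect_trans (linked_edge_of0 a k_le) _.
by apply: connect_trans (linked_same_vertex Eac) _; rewrite linked_sym linked_edge_of0.
Qed.

Lemma linked_gen (s2 : {perm T}) : rho b = s2 -> forall g, g \in gens_set s1 s2 etas ->
  forall w, linked (inr (edge_of 0 w)) (inr (edge_of 0 (g w))).
Proof.
move=> rho_b g; rewrite !inE => /or4P[/eqP->|/eqP->|g_eta|g_teta] w.
- rewrite (@edge_of_eq 0 (s1 w) w) ?connect0 // rho0.
  by have := porbit_perm s1 1 w; rewrite expg1.
- apply: connect_trans (linked_edge_of0 w (leqnn b)) _.
  rewrite (@edge_of_eq b w (s2 w)) //; first by rewrite linked_sym; apply: linked_edge_of0.
  by rewrite rho_b; have := porbit_perm s2 1 w; rewrite expg1.
- case/imsetP: g_eta => xy /tnthP[k ->] ->; case: tpermP => [->|->|_ _]; last exact: connect0;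
    by apply: (@linked_step_pair k); rewrite (rawv_at_xy (or_introl erefl)) (rawv_at_xy (or_intror erefl)).
- case/imsetP: g_teta => xy /tnthP[k ->] ->; case: tpermP => [->|->|_ _]; last exact: connect0;
    by apply: (@linked_step_pair k); rewrite (rawv_at_tau_xy (or_introl erefl)) (rawv_at_tau_xy (or_intror erefl)).
Qed.

Lemma linked_group (s2 : {perm T}) : rho b = s2 -> forall g, g \in <<gens_set s1 s2 etas>>%g ->
  forall w, linked (inr (edge_of 0 w)) (inr (edge_of 0 (g w))).
Proof.
move=> rho_b g /gen_prodgP[m [c c_gen ->]].
elim: m c c_gen => [|m IHm] c c_gen w; first by rewrite big_ord0 perm1 connect0.
rewrite big_ord_recr /= permM.
apply: connect_trans (IHm (fun i => c (widen_ord (leqnSn m) i)) (fun i => c_gen _) w) _.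
exact: linked_gen rho_b _ (c_gen ord_max) _.
Qed.

Lemma construction_connected (s2 : {perm T}) : rho b = s2 ->
  [transitive <<gens_set s1 s2 etas>>, on [set: T] | 'P] -> forall a c, linked a c.
Proof.
move=> rho_b trans; have z0 : T by exists 0; rewrite addn_gt0 n_gt0.
suff from_z0 a : linked (inr (edge_of 0 z0)) a.
  by move=> a c; apply: connect_trans (from_z0 c); rewrite linked_sym.
have to_level j w : j <= b -> linked (inr (edge_of 0 z0)) (inr (edge_of j w)).
  move=> j_le; apply: connect_trans (linked_edge_of0 w j_le).
  have [g g_in ->] := atransP2 trans (in_setT z0) (in_setT w).
  exact: linked_group rho_b g g_in z0.
case: a => [v|e].
  have [z zv] := rawv_at_surj v; have [u uz uE] := c_tgt_edge_of (rawV_step (val v)) z.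
  have Eu : u = v by apply: val_inj; rewrite uE zv.
  subst u.
  exact: connect_trans (to_level _ z (ltnW (ltn_ord _))) (linked_tgt uz).
case: e => -[j O] O_rho; case/porbitsP: (O_rho) => z /= EO.
have j_le : j <= b by rewrite -ltnS.
have -> : exist _ (j, O) O_rho = edge_of j z.
  by apply: val_inj; rewrite val_edge_of //= EO; congr pair; apply: val_inj; rewrite /= inordK.
exact: to_level.
Qed.

Lemma card_porbit_rhoS_C (k : 'I_b) : caseC s1 etas k ->
  #|porbit (rho k.+1) (X k)| = #|porbit (rho k) (X k)|.
Proof.
move=> C; apply: double_inj; rewrite -!card_porbitU_tau //.
by rewrite rhoS porbit_tstepU_C.
Qed.

Lemma c_pv_rawv_at (u : cVt) (k : 'I_b) O : val u = rawv_at k O -> c_pv u = k.+1.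
Proof. by rewrite /c_pv /rawv_at => ->; case: ifP. Qed.

Lemma c_tgt_spec (e : cEt) :
  (c_tgt e == None) = (c_he e == b) /\ forall u, c_tgt e = Some u -> c_pv u = (c_he e).+1.
Proof.
rewrite /c_he; have [j_lt|j_ge] := ltnP (val (val e).1) b.
  have [u uE uv] := @vertex_atE (Ordinal j_lt) (val e).2 (or_introl (valP e)).
  rewrite /c_tgt /= in uE *; rewrite uE (ltn_eqF j_lt); split => // u' [<-].
  exact: c_pv_rawv_at uv.
rewrite /c_tgt /vertex_at insubF ?ltnNge ?j_ge //; split => //.
by rewrite eqn_leq j_ge -ltnS ltn_ord.
Qed.

Lemma c_src_spec (e : cEt) :
  (c_src e == None) = (c_he e == 0) /\ forall u, c_src e = Some u -> c_pv u = c_he e.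
Proof.
rewrite /c_he /c_src; case: e => -[[[|j] j_lt] O] O_rho //=.
have j_lt' : j < b by [].
have [u -> uv] := @vertex_atE (Ordinal j_lt') O (or_intror O_rho).
by split => // u' [<-]; apply: c_pv_rawv_at uv.
Qed.

Lemma c_wt_gt0 (e : cEt) : 0 < c_wt e.
Proof. by rewrite /c_wt lt0n; case/porbitsP: (valP e) => z ->; apply: card_porbit_neq0. Qed.

Lemma c_he_ie (e : cEt) : c_he (c_ie e) = c_he e.
Proof. by rewrite /c_he val_c_ie. Qed.

Lemma c_wt_ie (e : cEt) : c_wt (c_ie e) = c_wt e.
Proof. by rewrite /c_wt val_c_ie card_tau_set. Qed.

Lemma c_pv_iv (v : cVt) : c_pv (c_iv v) = c_pv v.
Proof. by rewrite /c_pv val_c_iv; case: (val v) => [[]|[]]. Qed.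

Lemma c_pv_range (v : cVt) : 1 <= c_pv v <= b.
Proof. by rewrite /c_pv; case: (val v) => [[k _]|[k _]] /=; rewrite ltn_ord. Qed.

Lemma vdeg4 (v : cVt) : vdeg v = 4 -> exists2 k, val v = inl (k, true) & caseC s1 etas k.
Proof.
rewrite /vdeg; case: (val v) (valP v) => [[k s]|[k A]] //=.
by case C: caseC => //=; case: s => // _ _; exists k.
Qed.

Lemma vdeg_neq2 (k : 'I_b) (u : cVt) : (c_pv u == k.+1) && (vdeg u != 2) =
  (val u == inl (k, true)) || (val u == inl (k, false)) && ~~ caseC s1 etas k.
Proof.
rewrite /c_pv /vdeg; case: (val u) (valP u) => [[k' s]|[k' A]] /= u_ok; last by rewrite andbF.
rewrite -!sum_eqE /= !xpair_eqE eqSS (_ : (val k' == val k) = (k' == k)) //.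
have [<-|_] //= := eqVneq k' k.
by case: caseC u_ok; case: s.
Qed.

Lemma card_level (j : nat) : j < b.+1 -> #|[set e : cEt | c_he e == j]| = #|porbits (rho j)|.
Proof.
move=> j_lt; rewrite (_ : [set e | _] = edges_at j predT) ?card_edges_at //.
  by apply: eq_card => O; rewrite !inE andbT.
by apply/setP => e; rewrite !inE andbT.
Qed.

Lemma ends_at_level (j : nat) m (c : 'I_m -> {set T}) : j < b.+1 ->
  (forall i, c i \in porbits (rho j)) ->
  (forall O, O \in porbits (rho j) -> exists i, O = c i \/ O = tau_set (c i)) ->
  exists a : 'I_m -> cEt, (forall i, c_he (a i) = j /\ c_wt (a i) = #|c i|)
    /\ forall e : cEt, c_he e = j -> exists i, e = a i \/ e = c_ie (a i).
Proof.
move=> j_lt c_rho c_cover.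
exists (fun i => Sub (Ordinal j_lt, c i) (c_rho i) : cEt); split => // e ej.
have e1 : (val e).1 = Ordinal j_lt by apply: val_inj.
have Oe : (val e).2 \in porbits (rho j) by rewrite -ej; apply: (valP e).
have [i Ei] := c_cover _ Oe.
by exists i; case: Ei => Ei; [left | right]; apply: val_inj;
  rewrite ?val_c_ie [val e]surjective_pairing e1 Ei.
Qed.

Lemma construction_left_ends (mu : seq nat) : in_Btilde_lam mu s1 ->
  exists a : 'I_(size mu) -> cEt,
    [/\ forall i, c_he (a i) = 0 /\ c_wt (a i) = nth 0 mu i,
        forall e : cEt, c_he e = 0 -> exists i, e = a i \/ e = c_ie (a i)
      & #|[set e : cEt | c_he e == 0]| = (size mu).*2].
Proof.
case=> _ [c [c_s1 c_size c_cover c_card]].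
have [|||a [a_ends a_cover]] := @ends_at_level 0 _ c; rewrite ?rho0 //.
exists a; split => // [i|]; first by case: (a_ends i) => -> ->.
by rewrite card_level // rho0.
Qed.

Lemma construction_right_ends (nu : seq nat) : perm_eq (cycle_type (rho b)) (nu ++ nu) ->
  exists a : 'I_(size nu) -> cEt,
    [/\ forall i, c_he (a i) = b /\ c_wt (a i) = nth 0 nu i,
        forall e : cEt, c_he e = b -> exists i, e = a i \/ e = c_ie (a i)
      & #|[set e : cEt | c_he e == b]| = (size nu).*2].
Proof.
move=> ct_b; have [c [c_b c_size c_cover]] := cycle_type_pairs n_gt0 (rho_pt b) ct_b.
have [|||a [a_ends a_cover]] := @ends_at_level b _ c => //.
exists a; split => // [i|]; first by case: (a_ends i) => -> ->.
by rewrite card_level // card_porbits_cycle_type (perm_size ct_b) size_cat addnn.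
Qed.

Lemma c_len_ie (e : cEt) : c_len p (c_ie e) = c_len p e.
Proof. by rewrite /c_len c_he_ie c_wt_ie. Qed.

Lemma valence_construction (v : cVt) : @valence Rt G v = vdeg v.
Proof. exact: valence_vdeg. Qed.

Lemma construction_tropical_cover (s2 : {perm T}) : rho b = s2 ->
  [transitive <<gens_set s1 s2 etas>>, on [set: T] | 'P] -> tropical_cover b p G.
Proof.
move=> rho_b trans; have z0 : T by exists 0; rewrite addn_gt0 n_gt0.
split; first exact: c_pv_range.
split; first by move=> e; rewrite /c_he -ltnS ltn_ord.
split; first exact: c_src_spec.
split; first exact: c_tgt_spec.
split; first exact: c_wt_gt0.
split.
  move=> e _; rewrite /c_len GRing.mulrC GRing.divfK //.
  by rewrite Num.Theory.pnatr_eq0 -lt0n c_wt_gt0.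
split; first by move=> j j_le; exists (edge_of j z0); rewrite /= /c_he val_edge_of //= inordK.
split.
  move=> i /andP[i_gt0 i_le]; have k_lt : i.-1 < b by rewrite prednK.
  by exists (Sub (inl (Ordinal k_lt, true)) (implybT _) : cVt); rewrite /= /c_pv /= prednK.
split; first exact: harmonic_construction.
exact: construction_connected rho_b trans.
Qed.

Lemma construction_vertices_over (i : nat) : 1 <= i <= b ->
  let Vi := [set v : gV G | (gpv v == i) && (valence v != 2)] in
  (exists v w : gV G, [/\ v != w, Vi = [set v; w], valence v = 3 & valence w = 3])
  \/ (exists v : gV G, Vi = [set v] /\ valence v = 4).
Proof.
case/andP=> i_gt0 i_le; have k_lt : i.-1 < b by rewrite prednK.
set k := Ordinal k_lt; have -> : i = k.+1 by rewrite /= prednK.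
pose vk (s : bool) (ok : caseC s1 etas k ==> s) : cVt := Sub (inl (k, s)) ok.
have Vi_E (u : cVt) : (c_pv u == k.+1) && (@valence Rt G u != 2) =
    (val u == inl (k, true)) || (val u == inl (k, false)) && ~~ caseC s1 etas k.
  by rewrite valence_construction vdeg_neq2.
have [C|notC] := boolP (caseC s1 etas k).
  right; exists (vk true (implybT _)); split; last by rewrite valence_construction /vdeg /= C.
  apply/setP => u; rewrite !inE Vi_E (_ : ~~ caseC s1 etas k = false) ?C // andbF orbF.
  by apply/eqP/eqP => [uE|->]; first apply: val_inj.
have notC_false : caseC s1 etas k ==> false by rewrite (negbTE notC).
left; exists (vk true (implybT _)), (vk false notC_false); split.
- by apply/eqP => /(congr1 val) /= [].
- apply/setP => u; rewrite !inE Vi_E notC andbT.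
  by congr orb; apply/eqP/eqP => [uE|->] //; apply: val_inj.
- by rewrite valence_construction /vdeg /= (negbTE notC).
- by rewrite valence_construction /vdeg /= (negbTE notC).
Qed.

Lemma construction_four_valent_weights (v : gV G) : valence v = 4 ->
  forall e e' : gE G, (gsrc e == Some v) || (gtgt e == Some v) ->
  (gsrc e' == Some v) || (gtgt e' == Some v) -> gwt e = gwt e'.
Proof.
rewrite valence_construction => /vdeg4[k vE C].
have [in_v out_v] := cycles_at_C vE C.
suff wt_at (e : cEt) : (c_src e == Some v) || (c_tgt e == Some v) ->
    c_wt e = #|porbit (rho k) (X k)|.
  by move=> e e' ev e'v; rewrite /= (wt_at e ev) (wt_at e' e'v).
rewrite /c_wt -/(cycle_of e).
case/orP=> [/cycle_of_out|/cycle_of_in]; rewrite ?in_v ?out_v !inE => /orP[] /eqP ->;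
  by rewrite ?porbit_tau ?card_tau_set ?card_porbit_rhoS_C.
Qed.

Lemma construction_fixed_locus (v : gV G) : @tiv Rt _ v = v <-> valence v = 4.
Proof. by rewrite valence_construction; apply: c_iv_fixed. Qed.

End Construction.

Theorem lemma4p2 (R : realType) (g n : nat) (mu nu : seq nat) (b : nat)
  (sigma1 sigma2 : {perm 'I_(n + n)})
  (etas : b.-tuple ('I_(n + n) * 'I_(n + n)))
  (p : nat -> R) :
  0 < n ->
  is_partition n mu -> is_partition n nu ->
  b = (g + size mu + size nu).-1 -> 0 < b ->
  in_Cg mu nu sigma1 etas sigma2 ->
  (forall i, 1 <= i < b -> (p i < p i.+1)%R) ->
  twisted_tropical_cover g mu nu b p (construction p sigma1 etas).
Proof.
move=> n_gt0 _ _ b_eq _ [s1_lam ct_s2 etas_ok rho_b trans] _.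
have s1_pt := in_Btilde_ptW (proj1 s1_lam).
have ct_b : perm_eq (cycle_type (rho sigma1 etas b)) (nu ++ nu) by rewrite rho_b.
have etas_neq k : (tnth etas k).1 != (tnth etas k).2.
  by case: (etas_ok _ (mem_tnth k etas)).
split; first exact: construction_tropical_cover rho_b trans.
split; first exact: c_ivK.
split; first exact: c_ieK.
split; first by move=> e; split; [apply: c_src_ie | apply: c_tgt_ie].
split; first by move=> e _; apply: c_len_ie.
split; first exact: c_pv_iv.
split; first by move=> e; split; [apply: c_he_ie | apply: c_wt_ie].
split; first exact: b_eq.
split; first exact: construction_left_ends s1_lam.
split; first exact: construction_right_ends ct_b.
split; first exact: construction_vertices_over.
split; first exact: construction_four_valent_weights.
split; first exact: c_ie_neq.
exact: construction_fixed_locus.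
Qed.
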